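(* For every integer $s \geq 1$, $$\mathsf {Brac}_{2,s}=\mathsf {Brac}_{2}= \left\{ \big( (p, 1-p), (1-p,p) \big) \, : \, p\in[0,1]\right\}.$$
   Context: $\Delta_d=\{\alpha\in\mathbb R^d:\alpha_i\ge0,\ \sum_i\alpha_i=1\}$. $\mathsf{Brac}_d=\{(\alpha,\beta)\in\Delta_d^2:\ \forall i,\ \sqrt{\alpha_i\beta_i}\le\sum_{j\ne i}\sqrt{\alpha_j\beta_j}\}$. For $s\ge1$, $\mathsf{Brac}_{d,s}$ is the set of $(\alpha,\beta)\in\Delta_d^2$ for which there exist $A_1,\dots,A_d,B_1,\dots,B_d\in M_s(\mathbb C)$ with $\sum_i A_iA_i^*=\sum_iB_iB_i^*=I_s$, $\sum_iA_iB_i^*=0$, and $\tfrac1s\|A_i\|_F^2=\alpha_i$, $\tfrac1s\|B_i\|_F^2=\beta_i$ for all $i$, where $\|X\|_F=\operatorname{Tr}(XX^* )^{1/2}$. *)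

From HB Require Import structures.
From mathcomp Require Import all_boot all_order all_algebra.
From mathcomp Require Import complex.
Set Implicit Arguments. Unset Strict Implicit. Unset Printing Implicit Defensive.
Import Order.TTheory GRing.Theory Num.Theory.
Local Open Scope ring_scope.
Local Open Scope complex_scope.

Definition in_simplex (R : rcfType) (d : nat) (a : {ffun 'I_d -> R}) : Prop :=
  (forall i, 0 <= a i) /\ \sum_(i < d) a i = 1.

Definition Brac (R : rcfType) (d : nat) (a b : {ffun 'I_d -> R}) : Prop :=
  [/\ in_simplex a, in_simplex b &
      forall i : 'I_d, Num.sqrt (a i * b i) <= \sum_(j < d | j != i) Num.sqrt (a j * b j)].

Definition adjmx (R : rcfType) (m n : nat) (X : 'M[R[i]]_(m, n)) : 'M[R[i]]_(n, m) :=
  (map_mx (@conjc R) X)^T.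

(* squared Frobenius norm ||X||_F^2 = Tr(X X^* ) (a complex number, real nonnegative) *)
Definition frob2 (R : rcfType) (s : nat) (X : 'M[R[i]]_s) : R[i] := \tr (X *m adjmx X).

Definition Brac_s (R : rcfType) (d s : nat) (a b : {ffun 'I_d -> R}) : Prop :=
  [/\ in_simplex a, in_simplex b &
      exists (A B : 'I_d -> 'M[R[i]]_s),
        [/\ \sum_(i < d) A i *m adjmx (A i) = 1%:M,
            \sum_(i < d) B i *m adjmx (B i) = 1%:M,
            \sum_(i < d) A i *m adjmx (B i) = 0,
            forall i, frob2 (A i) / s%:R = (a i)%:C &
            forall i, frob2 (B i) / s%:R = (b i)%:C]].

Definition pt2 (R : rcfType) (p q : R) : {ffun 'I_2 -> R} :=
  [ffun i : 'I_2 => if i == ord0 then p else q].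

From HB Require Import structures.
From mathcomp Require Import all_boot all_order all_algebra.
From mathcomp Require Import complex.
From mathcomp Require Import lra.
Set Implicit Arguments.
Unset Strict Implicit.
Unset Printing Implicit Defensive.

Import Order.TTheory GRing.Theory Num.Theory.
Local Open Scope ring_scope.

(* For d = 2 the bracket inequalities say sqrt(a0 b0) = sqrt(a1 b1), which on
   the simplex forces a0 + b0 = 1.  For the matrix version, the rows (A0 A1)
   and (B0 B1) of the 2s x 2s block matrix W are orthonormal, so W W^* = 1,
   hence W^* W = 1; its upper-left block gives A0^* A0 + B0^* B0 = 1, and
   taking traces gives s (a0 + b0) = s.  Conversely the scalar matrices
   A = (sqrt p, sqrt (1-p)), B = (sqrt (1-p), -sqrt p) realise every point. *)

Local Notation i1 := (lift ord0 ord0 : 'I_2).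

Section Simplex2.
Variable R : rcfType.

Lemma ord2_cases (i : 'I_2) : i = ord0 \/ i = i1.
Proof. by case: i => [[|[|//]] ?]; [left | right]; apply: val_inj. Qed.

Lemma sum_ord2 (F : 'I_2 -> R) : \sum_(i < 2) F i = F ord0 + F i1.
Proof. by rewrite big_ord_recl big_ord1. Qed.

Lemma ffun2E (f : {ffun 'I_2 -> R}) : f = pt2 (f ord0) (f i1).
Proof. by apply/ffunP => i; rewrite ffunE; case: (ord2_cases i) => ->. Qed.

Lemma in_simplex_pt2 (x y : R) :
  0 <= x -> 0 <= y -> x + y = 1 -> in_simplex (pt2 x y).
Proof.
move=> x_ge0 y_ge0 xy1; split; last by rewrite sum_ord2 !ffunE.
by move=> i; rewrite ffunE; case: ifP.
Qed.

Lemma simplex2_complement (a b : {ffun 'I_2 -> R}) :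
  in_simplex a -> in_simplex b -> a ord0 + b ord0 = 1 ->
  exists p : R, 0 <= p <= 1 /\ a = pt2 p (1 - p) /\ b = pt2 (1 - p) p.
Proof.
case=> a_ge0 a1 [b_ge0 b1] ab1.
move: (a_ge0 ord0) (a_ge0 i1) (b_ge0 ord0) (b_ge0 i1) a1 b1.
rewrite !sum_ord2 => *; exists (a ord0); split; first by apply/andP; split; lra.
by split; rewrite [LHS]ffun2E; congr pt2; lra.
Qed.

Lemma Brac2E (a b : {ffun 'I_2 -> R}) :
  Brac a b <->
  exists p : R, 0 <= p <= 1 /\ a = pt2 p (1 - p) /\ b = pt2 (1 - p) p.
Proof.
split.
- case=> a_simplex b_simplex bracket; apply: simplex2_complement => //.
  have := bracket i1; rewrite big_mkcond sum_ord2 /= addr0 => le10.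
  have := bracket ord0; rewrite big_mkcond sum_ord2 /= add0r => le01.
  have ab_eq : a ord0 * b ord0 = a i1 * b i1.
    case: a_simplex b_simplex => [a_ge0 a1] [b_ge0 b1].
    rewrite -[LHS]sqr_sqrtr ?mulr_ge0 // -[RHS]sqr_sqrtr ?mulr_ge0 //.
    by congr (_ ^+ 2); apply/le_anti; rewrite le10 le01.
  case: a_simplex b_simplex => [_ a1] [_ b1].
  by move: a1 b1; rewrite !sum_ord2 => *; nra.
- case=> p [/andP[p_ge0 p_le1] [-> ->]].
  split; [apply: in_simplex_pt2; lra | apply: in_simplex_pt2; lra |].
  move=> i; rewrite big_mkcond sum_ord2 /=.
  by case: (ord2_cases i) => -> /=; rewrite !ffunE /= ?addr0 ?add0r mulrC.
Qed.

End Simplex2.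

Section Adjoint.
Variable R : rcfType.
Local Open Scope complex_scope.

Lemma adjmxD m n (X Y : 'M[R[i]]_(m, n)) : adjmx (X + Y) = adjmx X + adjmx Y.
Proof. by rewrite /adjmx map_mxD linearD. Qed.

Lemma adjmxM m n p (X : 'M[R[i]]_(m, n)) (Y : 'M[R[i]]_(n, p)) :
  adjmx (X *m Y) = adjmx Y *m adjmx X.
Proof. by rewrite /adjmx map_mxM trmx_mul. Qed.

Lemma adjmxK m n (X : 'M[R[i]]_(m, n)) : adjmx (adjmx X) = X.
Proof. by apply/matrixP => i j; rewrite !mxE conjcK. Qed.

Lemma adjmx_real_scalar n (x : R) : adjmx (x%:C%:M : 'M[R[i]]_n) = x%:C%:M.
Proof.
by rewrite /adjmx map_scalar_mx tr_scalar_mx; congr scalar_mx; exact: conjc_real.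
Qed.

Lemma adjmx_block m1 m2 n1 n2 (A0 : 'M[R[i]]_(m1, n1)) (A1 : 'M_(m1, n2))
    (B0 : 'M_(m2, n1)) (B1 : 'M_(m2, n2)) :
  adjmx (block_mx A0 A1 B0 B1) =
    block_mx (adjmx A0) (adjmx B0) (adjmx A1) (adjmx B1).
Proof. by rewrite /adjmx map_block_mx tr_block_mx. Qed.

Lemma frob2_real_scalar n (x : R) :
  frob2 (x%:C%:M : 'M[R[i]]_n) = (x * x)%:C * n%:R.
Proof.
by rewrite /frob2 adjmx_real_scalar -scalar_mxM mxtrace_scalar rmorphM mulr_natr.
Qed.

Lemma orthonormal_rows_frob2 s (A0 A1 B0 B1 : 'M[R[i]]_s) :
  A0 *m adjmx A0 + A1 *m adjmx A1 = 1%:M ->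
  B0 *m adjmx B0 + B1 *m adjmx B1 = 1%:M ->
  A0 *m adjmx B0 + A1 *m adjmx B1 = 0 ->
  frob2 A0 + frob2 B0 = s%:R.
Proof.
move=> AA BB AB.
have BA : B0 *m adjmx A0 + B1 *m adjmx A1 = 0.
  by rewrite -[B0]adjmxK -[B1]adjmxK -!adjmxM -adjmxD AB /adjmx map_mx0 trmx0.
pose W := block_mx A0 A1 B0 B1.
have WW : W *m adjmx W = 1%:M.
  by rewrite adjmx_block mulmx_block AA BB AB BA -scalar_mx_block.
have ul1 : ulsubmx (1%:M : 'M[R[i]]_(s + s)) = 1%:M.
  by apply/matrixP => i j; rewrite !mxE eq_lshift.
have := congr1 (@ulsubmx _ s s s s) (mulmx1C WW).
rewrite adjmx_block mulmx_block block_mxKul ul1 => /(congr1 mxtrace).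
by rewrite mxtraceD mxtrace1 (mxtrace_mulC (adjmx A0)) (mxtrace_mulC (adjmx B0)).
Qed.

End Adjoint.

Section Brac2s.
Variables (R : rcfType) (s : nat).
Hypothesis s_gt0 : (0 < s)%N.
Local Open Scope complex_scope.

Let s_neq0 : (s%:R : R[i]) != 0.
Proof. by rewrite pnatr_eq0 -lt0n. Qed.

Lemma Brac_s2_sum (a b : {ffun 'I_2 -> R}) : Brac_s s a b -> a ord0 + b ord0 = 1.
Proof.
case=> _ _ [A [B [AA BB AB Aa Bb]]].
rewrite !big_ord_recl !big_ord0 !addr0 in AA BB AB.
have := orthonormal_rows_frob2 AA BB AB.
rewrite -(divfK s_neq0 (frob2 (A ord0))) -(divfK s_neq0 (frob2 (B ord0))).
rewrite Aa Bb -mulrDl -rmorphD -[X in _ = X]mul1r => /(mulIf s_neq0).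
by rewrite -(rmorph1 (real_complex R)); apply: complexI.
Qed.

Lemma Brac_s2_pt2 (p : R) :
  0 <= p <= 1 -> Brac_s s (pt2 p (1 - p)) (pt2 (1 - p) p).
Proof.
move=> /andP[p_ge0 p_le1].
set x := Num.sqrt p; set y := Num.sqrt (1 - p).
have xx : x * x = p by rewrite -expr2 sqr_sqrtr.
have yy : y * y = 1 - p by rewrite -expr2 sqr_sqrtr // subr_ge0.
split; [apply: in_simplex_pt2; lra | apply: in_simplex_pt2; lra |].
exists (fun i => (if i == ord0 then x else y)%:C%:M),
       (fun i => (if i == ord0 then y else - x)%:C%:M).
rewrite !big_ord_recl !big_ord0 !addr0 /= !adjmx_real_scalar.
rewrite -!scalar_mxM -!rmorphM -!raddfD /=.
split.
- by rewrite xx yy addrC subrK.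
- by rewrite mulrNN xx yy subrK.
- by rewrite mulrN mulrC subrr rmorph0; apply: raddf0.
- move=> i; rewrite frob2_real_scalar mulfK //.
  by case: (ord2_cases i) => -> /=; rewrite ffunE /= ?xx ?yy.
- move=> i; rewrite frob2_real_scalar mulfK //.
  by case: (ord2_cases i) => -> /=; rewrite ffunE /= ?mulrNN ?xx ?yy.
Qed.

End Brac2s.

Theorem proposition3p9 (R : rcfType) (s : nat) (hs : (1 <= s)%N) :
  (forall a b : {ffun 'I_2 -> R}, Brac_s s a b <-> Brac a b) /\
  (forall a b : {ffun 'I_2 -> R},
     Brac a b <-> exists p : R, 0 <= p <= 1 /\ a = pt2 p (1 - p) /\ b = pt2 (1 - p) p).
Proof.
split=> a b; last exact: Brac2E.
split=> [bracs | /Brac2E [p [p01 [-> ->]]]]; last exact: Brac_s2_pt2.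
apply/Brac2E; case: (bracs) => a_simplex b_simplex _.
exact: simplex2_complement (Brac_s2_sum hs bracs).
Qed.
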